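(* Let $q$ be a prime and $P\ge2$, $M\ge1$, $K\ge1$ integers. Define $$E_2(q,P,M,K):=\sum_{\chi\ne\chi_0}\sum_{m=1}^{M}\frac1m\sum_{k>K}\frac{\mu(k)}{k}\log\bigl(L_P(km,\chi^{km})\bigr).$$ Then $$|E_2(q,P,M,K)|\le\frac{2P(q-1)}{K^2(P-1)(P^K-1)},$$ a bound independent of $M$.
   Context: $\chi$ runs over the non-principal Dirichlet characters modulo $q$ ($\chi_0$ principal), $\mu$ is the Möbius function, and for a Dirichlet character $\chi$ and $\Re(s)>1$ (or $\Re(s)\ge1$ when $\chi$ is non-principal), $L_P(s,\chi):=\prod_{p>P}\bigl(1-\chi(p)p^{-s}\bigr)^{-1}=L(s,\chi)\prod_{p\le P}\bigl(1-\chi(p)p^{-s}\bigr)$, with $\log$ the branch given by $\log L_P(s,\chi)=-\sum_{p>P}\log(1-\chi(p)p^{-s})$ using the principal logarithm series. *)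

From Stdlib Require Import Reals List.
From Coquelicot Require Import Coquelicot.
From mathcomp Require Import ssreflect ssrfun ssrbool eqtype ssrnat seq div prime.

Open Scope R_scope.

(* Sum of a complex series, componentwise (Coquelicot's Series = Lim_seq of
   partial sums).  Agrees with the usual sum for convergent series. *)
Definition CSeries (a : nat -> C) : C :=
  (Series (fun n => Re (a n)), Series (fun n => Im (a n))).

Fixpoint Cpown (z : C) (n : nat) : C :=
  match n with O => RtoC 1 | S n' => Cmult z (Cpown z n') end.

Definition DirChar (q : nat) (chi : nat -> C) : Prop :=
  chi 1%nat = RtoC 1 /\
  (forall m n : nat, chi (m * n)%nat = Cmult (chi m) (chi n)) /\
  (forall n : nat, chi (n + q)%nat = chi n) /\
  (forall n : nat, chi n = RtoC 0 <-> ~~ coprime n q).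

Definition principal_char (q : nat) : nat -> C :=
  fun n => if coprime n q then RtoC 1 else RtoC 0.

(* Moebius function (value at 0 is irrelevant, set to 0) *)
Definition mobius (n : nat) : R :=
  if n == 0%nat then 0
  else if all (fun p => logn p n == 1%nat) (primes n)
       then (-1) ^ (size (primes n)) else 0.

(* principal branch of log(1 - w), |w| < 1, via its power series:
   log(1 - w) = - sum_{j>=1} w^j / j *)
Definition log_one_minus (w : C) : C :=
  Copp (CSeries (fun j => Cdiv (Cpown w (S j)) (RtoC (INR (S j))))).

(* log L_P(s, psi) := - sum_{p > P, p prime} log(1 - psi(p) p^{-s}),
   for a natural number exponent s (only s = k m >= 2 is used). *)
Definition logLP (P s : nat) (psi : nat -> C) : C :=
  Copp (CSeries (fun p =>
    if prime p && (P < p)%nat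
    then log_one_minus (Cmult (psi p) (RtoC (/ (INR p ^ s))))
    else RtoC 0)).

Definition Csum_list {A : Type} (l : list A) (f : A -> C) : C :=
  fold_right (fun a acc => Cplus (f a) acc) (RtoC 0) l.

Definition E2_chi (P M K : nat) (chi : nat -> C) : C :=
  Csum_list (List.seq 1 M) (fun m =>
    Cmult (RtoC (/ INR m))
      (CSeries (fun k =>
         if (K < k)%nat
         then Cmult (RtoC (mobius k / INR k))
                    (logLP P (k * m) (fun n => Cpown (chi n) (k * m)))
         else RtoC 0))).

(* E_2(q,P,M,K), the outer sum running over a duplicate-free list [chars]
   enumerating the non-principal Dirichlet characters modulo q. *)
Definition E2 (P M K : nat) (chars : list (nat -> C)) : C :=
  Csum_list chars (E2_chi P M K).

From Stdlib Require Import Reals List Lra FunctionalExtensionality.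
From Coquelicot Require Import Coquelicot.
From mathcomp Require Import ssreflect ssrfun ssrbool eqtype ssrnat seq div prime.
From mathcomp Require Import fintype finset fingroup ssralg finalg zmodp cyclic poly.
From mathcomp Require Import Rstruct.
From mathcomp.real_closed Require complex.
Import complex.ComplexField.

(* For [|psi| <= 1] and [s >= 2], [|log L_P(s, psi)| <= 2 sum_(p > P) p^-s] because
   [|log (1 - w)| <= 2 |w|] when [|w| <= 1/2], and [p^-s] is dominated by the telescoping
   difference [((p-1)^-(s-1) - p^-(s-1)) / (s-1)], so [|log L_P(s, psi)| <= 2 / ((s-1) P^(s-1))].
   For [s = k m] with [k > K] we have [k (k m - 1) >= K^2], hence the [(k, m)] term of [E_2] is
   at most [(2 P / K^2) P^-(k m)]; the geometric sums over [k > K] and [m >= 1] give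
   [2 P / (K^2 (P - 1) (P^K - 1))] for each character.  Finally there are at most [q - 1]
   characters: each is determined by its value at a primitive root mod [q], which is a
   [(q-1)]-th root of unity. *)

Open Scope R_scope.

Lemma Rabs_dot_le_Cmod (c d : R) (z : C) :
  c ^ 2 + d ^ 2 = 1 -> Rabs (c * Re z + d * Im z) <= Cmod z.
Proof.
case: z => x y /= hcd; rewrite /Cmod /= -sqrt_Rsqr_abs /Rsqr.
apply: sqrt_le_1_alt.
have : 0 <= (c * y - d * x) ^ 2 by apply: pow2_ge_0.
nra.
Qed.

(* Rotating [CSeries a] onto the real axis reduces the bound to [Series_Rabs]. *)
Lemma Cmod_CSeries_le (a : nat -> C) (b : nat -> R) :
  (forall n, Cmod (a n) <= b n) -> ex_series b -> Cmod (CSeries a) <= Series b.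
Proof.
move=> hab exb.
have dot_le c d n : c ^ 2 + d ^ 2 = 1 -> Rabs (c * Re (a n) + d * Im (a n)) <= b n.
  by move=> hcd; apply: Rle_trans (Rabs_dot_le_Cmod _ _ _ hcd) (hab n).
have ex_dot c d : c ^ 2 + d ^ 2 = 1 -> ex_series (fun n => c * Re (a n) + d * Im (a n)).
  by move=> hcd; apply: (ex_series_le _ b) => // n; apply: dot_le.
have exRe : ex_series (fun n => Re (a n)).
  by apply: (ex_series_ext _ _ _ (ex_dot 1 0 ltac:(lra))) => n; rewrite /=; lra.
have exIm : ex_series (fun n => Im (a n)).
  by apply: (ex_series_ext _ _ _ (ex_dot 0 1 ltac:(lra))) => n; rewrite /=; lra.
rewrite /CSeries; set X := Series _; set Y := Series _.
have Series_dot_le c d : c ^ 2 + d ^ 2 = 1 -> Rabs (c * X + d * Y) <= Series b.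
  move=> hcd; rewrite /X /Y -!Series_scal_l -Series_plus; try exact: ex_series_scal_l.
  have exabs : ex_series (fun n => Rabs (c * Re (a n) + d * Im (a n))).
    by apply: (ex_series_le _ b) => // n; rewrite /norm /= /abs /= Rabs_Rabsolu; apply: dot_le.
  apply: Rle_trans (Series_Rabs _ exabs) _.
  by apply: Series_le => // n; split; [apply: Rabs_pos | apply: dot_le].
set r := Cmod (X, Y).
have r2 : r ^ 2 = X ^ 2 + Y ^ 2 by rewrite /r Cmod2_alt.
have [r0 | rpos] : r = 0 \/ 0 < r by have := Cmod_ge_0 (X, Y); rewrite -/r; lra.
- rewrite r0; apply: Rle_trans (Rabs_pos (1 * X + 0 * Y)) (Series_dot_le _ _ _); lra.
- have -> : r = X / r * X + Y / r * Y by field_simplify_eq; lra.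
  apply: Rle_trans (Rle_abs _) (Series_dot_le _ _ _).
  by field_simplify_eq; lra.
Qed.

Lemma sum_n_telescoping_tail (f : nat -> R) (N0 N : nat) :
  sum_n (fun n => if (N0 < n)%nat then f n.-1 - f n else 0) N =
  if (N <= N0)%nat then 0 else f N0 - f N.
Proof.
elim: N => [|N IH]; first by rewrite sum_O.
rewrite sum_Sn IH /plus /= ltnS.
by case: (ltngtP N N0) => [_|_|->]; ring.
Qed.

Lemma Cmod_CSeries_le_telescoping (a : nat -> C) (f : nat -> R) (N0 : nat) :
  (forall n, 0 <= f n) ->
  (forall n, Cmod (a n) <= if (N0 < n)%nat then f n.-1 - f n else 0) ->
  Cmod (CSeries a) <= f N0.
Proof.
move=> f_ge0 hab.
set b := fun n => if (N0 < n)%nat then f n.-1 - f n else 0.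
have b_ge0 n : 0 <= b n by apply: Rle_trans (Cmod_ge_0 _) (hab n).
have partial_le N : sum_n b N <= f N0.
  rewrite sum_n_telescoping_tail; case: ifP => _; have := f_ge0 N0; have := f_ge0 N; lra.
have [l hl] : ex_finite_lim_seq (sum_n b).
  apply: (ex_finite_lim_seq_incr _ (f N0)) => // n.
  by rewrite sum_Sn /plus /=; have := b_ge0 n.+1; lra.
apply: Rle_trans (Cmod_CSeries_le a b hab (ex_intro _ l hl)) _.
rewrite (is_series_unique _ _ hl).
exact: (is_lim_seq_le _ _ l (f N0) partial_le hl (is_lim_seq_const _)).
Qed.

Lemma Cmod_Cpown (z : C) (n : nat) : Cmod (Cpown z n) = Cmod z ^ n.
Proof. by elim: n => [|n IH] /=; rewrite ?Cmod_1 // Cmod_mult IH. Qed.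

Lemma Cmod_log_one_minus_le (w : C) :
  Cmod w <= 1 / 2 -> Cmod (log_one_minus w) <= 2 * Cmod w.
Proof.
move=> hw; rewrite /log_one_minus Cmod_opp.
have w_ge0 := Cmod_ge_0 w.
have geom : is_series (fun j => Cmod w * Cmod w ^ j) (Cmod w * / (1 - Cmod w)).
  by apply: is_series_scal_l; apply: is_series_geom; rewrite Rabs_pos_eq; lra.
apply: Rle_trans (Cmod_CSeries_le _ _ _ (ex_intro _ _ geom)) _.
- move=> j; have j1 : 1 <= INR j.+1 by rewrite S_INR; have := pos_INR j; lra.
  rewrite Cmod_div; last by case=> /(not_0_INR j.+1); apply.
  rewrite Cmod_Cpown Cmod_R Rabs_pos_eq; last lra.
  have : 0 <= Cmod w ^ j.+1 by apply: pow_le.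
  have : / INR j.+1 <= 1 by rewrite -Rinv_1; apply: Rinv_le_contravar; lra.
  rewrite /Rdiv /=; nra.
- rewrite (is_series_unique _ _ geom).
  have : / (1 - Cmod w) <= 2 by rewrite -[2]Rinv_inv; apply: Rinv_le_contravar; lra.
  nra.
Qed.

Lemma pow_succ_add1_ge (b : R) (n : nat) :
  0 <= b -> b ^ n.+1 + INR n.+1 * b ^ n <= (b + 1) ^ n.+1.
Proof.
move=> b_ge0; elim: n => [|n IH]; first by rewrite /= Rmult_1_r; lra.
have bn : 0 <= b ^ n by apply: pow_le.
have n0 := pos_INR n.
have := Rmult_le_compat_l (b + 1) _ _ ltac:(lra) IH.
rewrite !S_INR /=; nra.
Qed.

(* With [b = p - 1] and [t = n + 1] this reads [p^-(t+1) <= ((p-1)^-t - p^-t) / t],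
   so the sum of [p^-s] over the primes [p > P] telescopes. *)
Lemma inv_pow_succ_le_telescoping (b : R) (n : nat) : 1 <= b ->
  / (b + 1) ^ n.+2 <= / INR n.+1 * (/ b ^ n.+1 - / (b + 1) ^ n.+1).
Proof.
move=> b1.
have bn : 0 < b ^ n by apply: pow_lt; lra.
have An : 0 < (b + 1) ^ n.+1 by apply: pow_lt; lra.
have t0 : 0 < INR n.+1 by apply: lt_0_INR; apply/ltP.
have bern := pow_succ_add1_ge b n ltac:(lra).
set A := (b + 1) ^ n.+1 in An bern *.
have -> : (b + 1) ^ n.+2 = (b + 1) * A by [].
have -> : b ^ n.+1 = b * b ^ n by [].
have den : 0 < INR n.+1 * b * b ^ n * A by repeat apply: Rmult_lt_0_compat => //; lra.
have -> : / INR n.+1 * (/ (b * b ^ n) - / A) = (A - b * b ^ n) / (INR n.+1 * b * b ^ n * A).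
  by field; repeat split; lra.
apply: (Rle_trans _ (/ (b * A))); first by apply: Rinv_le_contravar; nra.
have -> : / (b * A) = INR n.+1 * b ^ n / (INR n.+1 * b * b ^ n * A) by field; repeat split; lra.
apply: Rmult_le_compat_r; first by apply: Rlt_le; apply: Rinv_0_lt_compat.
move: bern; rewrite /=; lra.
Qed.

Lemma INR_ge2 (n : nat) : (2 <= n)%nat -> 2 <= INR n.
Proof. by move=> /leP /le_INR. Qed.

Lemma pow_ge2 (x : R) (n : nat) : 2 <= x -> (1 <= n)%nat -> 2 <= x ^ n.
Proof. by move=> x2 /leP n1; have := Rle_pow x 1 n ltac:(lra) n1; rewrite pow_1; lra. Qed.

Lemma Cmod_logLP_le (P t : nat) (psi : nat -> C) :
  (2 <= P)%nat -> (forall n, Cmod (psi n) <= 1) ->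
  Cmod (logLP P t.+2 psi) <= 2 / (INR t.+1 * INR P ^ t.+1).
Proof.
move=> P2 psi_le1; rewrite /logLP Cmod_opp.
have t0 : 0 < INR t.+1 by apply: lt_0_INR; apply/ltP.
set f := fun p => 2 / (INR t.+1 * INR p ^ t.+1).
apply: (Cmod_CSeries_le_telescoping _ f) => [p | p].
  rewrite /f; have [-> | p0] := Req_dec (INR p ^ t.+1) 0; first by rewrite Rmult_0_r Rdiv_0_r; lra.
  apply: Rlt_le; apply: Rdiv_lt_0_compat; first lra.
  by apply: Rmult_lt_0_compat => //; have := pow_le _ t.+1 (pos_INR p); lra.
case Pp: (P < p)%nat; last by rewrite andbF Cmod_0; lra.
have p2 : (2 <= p)%nat := leq_trans P2 (ltnW Pp).
have pR := INR_ge2 p p2.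
have pred_pR : INR p.-1 + 1 = INR p by rewrite -S_INR prednK // ltnW.
have ps : 2 <= INR p ^ t.+2 := pow_ge2 _ t.+2 pR isT.
have term_le : 2 * / INR p ^ t.+2 <= f p.-1 - f p.
  have := inv_pow_succ_le_telescoping (INR p.-1) t; rewrite pred_pR /f /Rdiv => h.
  have {}h := Rmult_le_compat_l 2 _ _ ltac:(lra) (h ltac:(lra)).
  rewrite Rinv_mult (Rinv_mult (INR t.+1)); lra.
have inv_ps : 0 < / INR p ^ t.+2 by apply: Rinv_0_lt_compat; lra.
rewrite andbT; case: (prime p); last by rewrite Cmod_0; apply: Rle_trans term_le; lra.
set w := Cmult _ _.
have w_le : Cmod w <= / INR p ^ t.+2.
  rewrite /w Cmod_mult Cmod_R Rabs_pos_eq; last lra.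
  have := psi_le1 p; have := Cmod_ge_0 (psi p); nra.
have w_half : Cmod w <= 1 / 2.
  have : / INR p ^ t.+2 <= / 2 by apply: Rinv_le_contravar; lra.
  lra.
apply: Rle_trans (Cmod_log_one_minus_le _ w_half) _; lra.
Qed.

Lemma Rabs_mobius_le1 (k : nat) : Rabs (mobius k) <= 1.
Proof.
rewrite /mobius; case: (k == 0%nat); first by rewrite Rabs_R0; lra.
by case: (all _ _); rewrite ?pow_1_abs ?Rabs_R0; lra.
Qed.

(* [k (k m - 1) >= K^2] absorbs the factor [1/k] and the [1/(s-1)] of [Cmod_logLP_le]. *)
Lemma Cmod_mobius_logLP_le (P K k m : nat) (psi : nat -> C) :
  (2 <= P)%nat -> (1 <= K)%nat -> (K < k)%nat -> (1 <= m)%nat ->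
  (forall n, Cmod (psi n) <= 1) ->
  Cmod (Cmult (RtoC (mobius k / INR k)) (logLP P (k * m) psi))
  <= 2 * INR P / INR K ^ 2 * (/ INR P ^ m) ^ k.
Proof.
move=> P2 K1 Kk m1 psi_le1.
have km2 : (2 <= k * m)%nat := leq_trans (leq_ltn_trans K1 Kk) (leq_pmulr k m1).
have [t km] : exists t, (k * m = t.+2)%nat by exists (k * m - 2)%nat; rewrite -addn2 subnK.
have Kt : (K <= t.+1)%nat by rewrite -ltnS -km; apply: leq_trans Kk (leq_pmulr k m1).
have PR := INR_ge2 P P2.
have KR : 1 <= INR K by apply: (le_INR 1); apply/leP.
have kR : INR K + 1 <= INR k by rewrite -S_INR; apply: le_INR; apply/leP.
have tR : INR K <= INR t.+1 by apply: le_INR; apply/leP.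
have Pt : 0 < INR P ^ t.+1 by apply: pow_lt; lra.
have mu_le : Rabs (mobius k / INR k) <= / INR k.
  rewrite Rabs_mult Rabs_inv (Rabs_pos_eq (INR k)); last lra.
  have := Rabs_mobius_le1 k; have : 0 < / INR k by apply: Rinv_0_lt_compat; lra.
  nra.
rewrite Cmod_mult Cmod_R km.
apply: Rle_trans (Rmult_le_compat _ _ _ _ (Rabs_pos _) (Cmod_ge_0 _) mu_le
  (Cmod_logLP_le P t psi P2 psi_le1)) _.
rewrite pow_inv -pow_mult.
have -> : Nat.mul m k = t.+2 by rewrite -km; apply: Nat.mul_comm.
rewrite [INR P ^ t.+2]/=.
have -> : 2 * INR P / INR K ^ 2 * / (INR P * INR P ^ t.+1) = 2 / (INR K ^ 2 * INR P ^ t.+1).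
  by field; repeat split; lra.
have -> : / INR k * (2 / (INR t.+1 * INR P ^ t.+1)) = 2 / (INR k * INR t.+1 * INR P ^ t.+1).
  by field; repeat split; lra.
apply: Rmult_le_compat_l; first lra.
apply: Rinv_le_contravar; first by apply: Rmult_lt_0_compat; [apply: pow_lt|]; lra.
apply: Rmult_le_compat_r; first lra.
have : INR K * INR K <= INR k * INR t.+1 by apply: Rmult_le_compat; lra.
rewrite /=; lra.
Qed.

Lemma Cmod_mobius_series_le (P K m : nat) (chi : nat -> C) :
  (2 <= P)%nat -> (1 <= K)%nat -> (1 <= m)%nat -> (forall n, Cmod (chi n) <= 1) ->
  Cmod (CSeries (fun k =>
    if (K < k)%nat
    then Cmult (RtoC (mobius k / INR k)) (logLP P (k * m) (fun n => Cpown (chi n) (k * m)))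
    else RtoC 0))
  <= 2 * INR P / INR K ^ 2 * (/ INR P ^ m) ^ K.+1 / (1 - / INR P ^ m).
Proof.
move=> P2 K1 m1 chi_le1.
have PR := INR_ge2 P P2.
have Pm : 2 <= INR P ^ m := pow_ge2 _ _ PR m1.
set x := / INR P ^ m.
have x_half : 0 < x <= / 2.
  by split; [apply: Rinv_0_lt_compat | apply: Rinv_le_contravar]; lra.
set D := 2 * INR P / INR K ^ 2.
have D_ge0 : 0 <= D.
  apply: Rlt_le; apply: Rdiv_lt_0_compat; first lra.
  by apply: pow_lt; apply: lt_0_INR; apply/ltP.
set f := fun k => D * x ^ k.+1 / (1 - x).
apply: (Cmod_CSeries_le_telescoping _ f) => [k | k].
  rewrite /f /Rdiv; apply: Rmult_le_pos; last by apply: Rlt_le; apply: Rinv_0_lt_compat; lra.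
  by apply: Rmult_le_pos => //; apply: pow_le; lra.
case Kk: (K < k)%nat; last by rewrite Cmod_0; lra.
have -> : f k.-1 - f k = D * x ^ k.
  rewrite /f prednK; last exact: leq_ltn_trans Kk.
  by rewrite [x ^ k.+1]/=; field; lra.
apply: Cmod_mobius_logLP_le => // n.
rewrite Cmod_Cpown -(pow1 (k * m)).
by apply: pow_incr; split; [apply: Cmod_ge_0 | apply: chi_le1].
Qed.


Definition Rsum_list {A : Type} (l : list A) (g : A -> R) : R :=
  fold_right (fun a acc => g a + acc) 0 l.

Lemma Cmod_Csum_list_le {A : Type} (l : list A) (f : A -> C) (g : A -> R) :
  (forall a, In a l -> Cmod (f a) <= g a) -> Cmod (Csum_list l f) <= Rsum_list l g.
Proof.
elim: l => [|a l IH] fg /=; first by rewrite Cmod_0; lra.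
apply: Rle_trans (Cmod_triangle _ _) _.
by apply: Rplus_le_compat; [apply: fg; left | apply: IH => b lb; apply: fg; right].
Qed.

Lemma Rsum_list_const {A : Type} (l : list A) (c : R) :
  Rsum_list l (fun _ => c) = INR (length l) * c.
Proof.
rewrite /Rsum_list; elim: l => [|a l IH]; first by rewrite /=; ring.
change (length (a :: l)) with (length l).+1.
by rewrite [fold_right _ _ _]/= IH S_INR; ring.
Qed.

Lemma Rsum_list_seq_geom_le (c y : R) (a n : nat) : 0 <= c -> 0 <= y < 1 ->
  Rsum_list (List.seq a n) (fun m => c * y ^ m) <= c * y ^ a / (1 - y).
Proof.
move=> c0 y01; have ya : 0 <= y ^ a by apply: pow_le; lra.
rewrite /Rsum_list; elim: n a {ya} => [|n IH] a /=.
  by apply: Rmult_le_pos; [apply: Rmult_le_pos => //; apply: pow_le | apply: Rlt_le; apply: Rinv_0_lt_compat]; lra.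
apply: Rle_trans (Rplus_le_compat_l _ _ _ (IH a.+1)) _.
by rewrite [y ^ a.+1]/=; apply: Req_le; field; lra.
Qed.

Lemma inv_mul_geom_tail_le (p D : R) (K m : nat) : 2 <= p -> (1 <= m)%nat -> 0 <= D ->
  / INR m * (D * (/ p ^ m) ^ K.+1 / (1 - / p ^ m)) <= D * (p / (p - 1)) * (/ p ^ K.+1) ^ m.
Proof.
move=> p2 m1 D_ge0.
have m_inv : 0 < / INR m <= 1.
  have mR : 1 <= INR m by apply: (le_INR 1); apply/leP.
  by split; [apply: Rinv_0_lt_compat | rewrite -Rinv_1; apply: Rinv_le_contravar]; lra.
have pm : 0 < / p ^ m <= / 2.
  split; first by apply: Rinv_0_lt_compat; apply: pow_lt; lra.
  by apply: Rinv_le_contravar; [lra | apply: pow_ge2].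
have p_inv : / p ^ m <= / p.
  by apply: Rinv_le_contravar; [lra | have := Rle_pow p 1 m ltac:(lra) (elimT leP m1); rewrite pow_1].
have -> : (/ p ^ m) ^ K.+1 = (/ p ^ K.+1) ^ m by rewrite !pow_inv -!pow_mult Nat.mul_comm.
have ym : 0 <= D * (/ p ^ K.+1) ^ m by apply: Rmult_le_pos => //; apply: pow_le;
  apply: Rlt_le; apply: Rinv_0_lt_compat; apply: pow_lt; lra.
have geom_le : / (1 - / p ^ m) <= p / (p - 1).
  have -> : p / (p - 1) = / (1 - / p) by field; lra.
  have p_half : / p <= / 2 by apply: Rinv_le_contravar; lra.
  by apply: Rinv_le_contravar; lra.
have : 0 < / (1 - / p ^ m) by apply: Rinv_0_lt_compat; lra.
move: ym geom_le; rewrite /Rdiv.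
set I := / (1 - / p ^ m); set G := p * / (p - 1); set Dy := D * _ => ym geom_le I0.
have -> : / INR m * (D * (/ p ^ K.+1) ^ m * I) = (/ INR m * I) * Dy by rewrite /Dy; ring.
have -> : D * G * (/ p ^ K.+1) ^ m = G * Dy by rewrite /Dy; ring.
by apply: Rmult_le_compat_r => //; nra.
Qed.

Lemma geom_series_constant_le (p D : R) (K : nat) : 2 <= p -> (1 <= K)%nat -> 0 <= D ->
  D * (p / (p - 1)) * (/ p ^ K.+1) ^ 1 / (1 - / p ^ K.+1) <= D / ((p - 1) * (p ^ K - 1)).
Proof.
move=> p2 K1 D_ge0.
have pK : 2 <= p ^ K := pow_ge2 _ _ p2 K1.
have pK1 : p ^ K.+1 = p * p ^ K by [].
have -> : D * (p / (p - 1)) * (/ p ^ K.+1) ^ 1 / (1 - / p ^ K.+1) = D / (p - 1) * / (p ^ K - / p).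
  by rewrite pK1; field; repeat split; nra.
have -> : D / ((p - 1) * (p ^ K - 1)) = D / (p - 1) * / (p ^ K - 1) by field; lra.
apply: Rmult_le_compat_l; first by apply: Rdiv_le_0_compat; lra.
have p_half : / p <= / 2 by apply: Rinv_le_contravar; lra.
by apply: Rinv_le_contravar; lra.
Qed.

Lemma Cmod_E2_chi_le (P M K : nat) (chi : nat -> C) :
  (2 <= P)%nat -> (1 <= K)%nat -> (forall n, Cmod (chi n) <= 1) ->
  Cmod (E2_chi P M K chi) <= 2 * INR P / (INR K ^ 2 * (INR P - 1) * (INR P ^ K - 1)).
Proof.
move=> P2 K1 chi_le1.
have PR := INR_ge2 P P2.
have K0 : 0 < INR K ^ 2 by apply: pow_lt; apply: lt_0_INR; apply/ltP.
set D := 2 * INR P / INR K ^ 2.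
have D_ge0 : 0 <= D by apply: Rlt_le; apply: Rdiv_lt_0_compat; lra.
set c := D * (INR P / (INR P - 1)).
have c_ge0 : 0 <= c by apply: Rmult_le_pos => //; apply: Rlt_le; apply: Rdiv_lt_0_compat; lra.
set y := / INR P ^ K.+1.
have y01 : 0 <= y < 1.
  have PK1 : 2 <= INR P ^ K.+1 := pow_ge2 _ K.+1 PR isT.
  split; first by apply: Rlt_le; apply: Rinv_0_lt_compat; lra.
  by rewrite -Rinv_1; apply: Rinv_lt_contravar; lra.
apply: Rle_trans (Cmod_Csum_list_le _ _ (fun m => c * y ^ m) _) _.
- move=> m /in_seq [/leP m1 _].
  have m0 : 0 < / INR m by apply: Rinv_0_lt_compat; apply: lt_0_INR; apply/ltP.
  rewrite Cmod_mult Cmod_R Rabs_pos_eq; last lra.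
  apply: Rle_trans (inv_mul_geom_tail_le _ _ K m PR m1 D_ge0).
  by apply: Rmult_le_compat_l; [lra | apply: Cmod_mobius_series_le].
- apply: Rle_trans (Rsum_list_seq_geom_le c y 1 M c_ge0 y01) _.
  have -> : 2 * INR P / (INR K ^ 2 * (INR P - 1) * (INR P ^ K - 1)) = D / ((INR P - 1) * (INR P ^ K - 1)).
    by rewrite /D /Rdiv !Rinv_mult; ring.
  exact: geom_series_constant_le.
Qed.

Lemma primitive_root_mod_prime (q : nat) : prime q -> exists g : nat,
  (g ^ (q - 1) %% q = 1)%N /\ forall n, coprime n q -> exists i, (n %% q = g ^ i %% q)%N.
Proof.
move=> q_pr; have q1 := prime_gt1 q_pr.
have /cyclicP [u gen_u] := units_Zp_cyclic q_pr.
have val_expu i : (val (u ^+ i)%g : 'Z_q) = (nat_of_ord (val u) ^ i %% q)%N :> nat.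
  by rewrite unit_Zp_expg /=; congr (_ %% _)%N; apply: Zp_cast.
exists (nat_of_ord (val u)); split.
- have ord_u : #[u]%g = (q - 1)%N.
    by rewrite /order -gen_u card_units_Zp ?prime_gt0 // totient_prime // subn1.
  by rewrite -val_expu -ord_u expg_order /= modn_small.
- move=> n n_coprime.
  have n_unit : ((n%:R)%R : 'Z_q) \is a GRing.unit by rewrite unitZpE // coprime_sym.
  pose v : {unit 'Z_q} := FinRing.unit 'Z_q n_unit.
  have : v \in <[u]>%g by rewrite -gen_u inE.
  case/cycleP => i hi; exists i.
  by rewrite -val_expu -hi /= val_Zp_nat.
Qed.

Definition complex_of_C (z : C) : complex.complex R := complex.Complex z.1 z.2.

Lemma complex_of_C_inj : injective complex_of_C.
Proof. by case=> a1 a2 [b1 b2] [-> ->]. Qed.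

Lemma complex_of_C_Cpown (z : C) (n : nat) :
  complex_of_C (Cpown z n) = (complex_of_C z ^+ n)%R.
Proof. by elim: n => [|n IH] //; rewrite GRing.exprS -IH. Qed.

Lemma In_of_in {T : eqType} (x : T) (s : seq T) : x \in s -> In x s.
Proof. by elim: s => [//|y s IH]; rewrite inE => /orP [/eqP ->| /IH]; [left | right]. Qed.

Lemma uniq_of_NoDup {T : eqType} (s : seq T) : NoDup s -> uniq s.
Proof.
elim: s => [//|x s IH] /NoDup_cons_iff [x_notin nd] /=.
by rewrite IH // andbT; apply/negP => /In_of_in.
Qed.

Lemma NoDup_unity_roots_length_le (n : nat) (l : list C) : (0 < n)%N -> NoDup l ->
  (forall z, In z l -> Cpown z n = RtoC 1) -> (length l <= n)%N.
Proof.
move=> n0 nd roots; have -> : length l = size (map complex_of_C l) by rewrite size_map.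
apply: max_unity_roots => //.
- apply/allP => _ /mapP [z /In_of_in zl ->].
  by rewrite unity_rootE -complex_of_C_Cpown roots.
- by rewrite map_inj_uniq ?uniq_of_NoDup //; apply: complex_of_C_inj.
Qed.

Lemma pow_eq1_nonneg (r : R) (k : nat) : 0 <= r -> (0 < k)%N -> r ^ k = 1 -> r = 1.
Proof.
move=> r0 /ltP k0 rk; case: (Rtotal_order r 1) => [lt | [// | gt]].
- by have := pow_lt_1_compat r k (conj r0 lt) k0; lra.
- by have := Rlt_pow_R1 r k gt k0; lra.
Qed.

Section DirichletCharacters.
Variable q : nat.
Hypothesis q_prime : prime q.

Lemma DirChar_mod (chi : nat -> C) (n : nat) : DirChar q chi -> chi n = chi (n %% q)%N.
Proof.
case=> _ [_ [chi_period _]]; rewrite {1}(divn_eq n q) addnC.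
by elim: (n %/ q)%N => [|j IH]; rewrite ?mul0n ?addn0 // mulSnr addnA chi_period.
Qed.

Lemma DirChar_expn (chi : nat -> C) (g i : nat) : DirChar q chi -> chi (g ^ i)%N = Cpown (chi g) i.
Proof.
case=> chi1 [chi_mul _].
by elim: i => [|i IH]; rewrite ?expn0 // expnS chi_mul IH.
Qed.

Lemma DirChar_of_power_residue (chi : nat -> C) (g n i : nat) :
  DirChar q chi -> (n %% q = g ^ i %% q)%N -> chi n = Cpown (chi g) i.
Proof. by move=> chi_q ni; rewrite (DirChar_mod _ _ chi_q) ni -DirChar_mod // DirChar_expn. Qed.

Lemma DirChar_non_coprime (chi : nat -> C) (n : nat) :
  DirChar q chi -> ~~ coprime n q -> chi n = RtoC 0.
Proof. by case=> _ [_ [_ chi0]] /chi0. Qed.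

Lemma DirChar_generator_unity_root (chi : nat -> C) (g : nat) :
  (g ^ (q - 1) %% q = 1)%N -> DirChar q chi -> Cpown (chi g) (q - 1) = RtoC 1.
Proof. by move=> g_order chi_q; rewrite -DirChar_expn // (DirChar_mod _ _ chi_q) g_order; case: chi_q. Qed.

Lemma Cmod_DirChar_le1 (chi : nat -> C) : DirChar q chi -> forall n, Cmod (chi n) <= 1.
Proof.
move=> chi_q n; have [g [g_order g_gen]] := primitive_root_mod_prime q q_prime.
have chi_g1 : Cmod (chi g) = 1.
  apply: (pow_eq1_nonneg _ (q - 1)); first exact: Cmod_ge_0.
    by rewrite subn_gt0 prime_gt1.
  by rewrite -Cmod_Cpown DirChar_generator_unity_root // Cmod_1.
case n_coprime: (coprime n q).
- have [i ni] := g_gen n n_coprime.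
  by rewrite (DirChar_of_power_residue _ g n i chi_q ni) Cmod_Cpown chi_g1 pow1; lra.
- by rewrite DirChar_non_coprime ?n_coprime // Cmod_0; lra.
Qed.

Lemma DirChar_list_length_le (chars : list (nat -> C)) :
  NoDup chars -> (forall chi, In chi chars -> DirChar q chi) -> (length chars <= q - 1)%N.
Proof.
move=> nd chars_q; have [g [g_order g_gen]] := primitive_root_mod_prime q q_prime.
rewrite -(length_map (fun chi => chi g)).
apply: NoDup_unity_roots_length_le; first by rewrite subn_gt0 prime_gt1.
- apply: NoDup_map_NoDup_ForallPairs nd => chi1 chi2 /chars_q chi1_q /chars_q chi2_q chi12.
  apply: functional_extensionality => n; case n_coprime: (coprime n q).
  + have [i ni] := g_gen n n_coprime.
    by rewrite !(DirChar_of_power_residue _ g n i) // chi12.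
  + by rewrite !DirChar_non_coprime ?n_coprime.
- by move=> _ /in_map_iff [chi [<- /chars_q chi_q]]; apply: DirChar_generator_unity_root.
Qed.

End DirichletCharacters.

Theorem mainTheorem8 (q P M K : nat) (chars : list (nat -> C)) :
  prime q -> (2 <= P)%nat -> (1 <= M)%nat -> (1 <= K)%nat ->
  NoDup chars ->
  (forall chi : nat -> C, In chi chars <-> (DirChar q chi /\ chi <> principal_char q)) ->
  (Cmod (E2 P M K chars) <=
     2 * INR P * INR (q - 1) /
       (INR K ^ 2 * (INR P - 1) * (INR P ^ K - 1)))%R.
Proof.
move=> q_prime P2 _ K1 nd chars_spec.
have chars_q chi : In chi chars -> DirChar q chi by move=> /chars_spec [].
set B := 2 * INR P / (INR K ^ 2 * (INR P - 1) * (INR P ^ K - 1)).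
have B_ge0 : 0 <= B.
  have PR := INR_ge2 P P2; have PK := pow_ge2 _ _ PR K1.
  have K0 : 0 < INR K ^ 2 by apply: pow_lt; apply: lt_0_INR; apply/ltP.
  by apply: Rlt_le; apply: Rdiv_lt_0_compat; [lra | apply: Rmult_lt_0_compat; nra].
apply: Rle_trans (Cmod_Csum_list_le _ _ (fun _ => B) _) _.
  move=> chi /chars_q chi_q; apply: Cmod_E2_chi_le => //.
  exact: (Cmod_DirChar_le1 q q_prime chi chi_q).
rewrite Rsum_list_const.
have -> : 2 * INR P * INR (q - 1) / (INR K ^ 2 * (INR P - 1) * (INR P ^ K - 1)) = INR (q - 1) * B.
  by rewrite /B /Rdiv; ring.
apply: Rmult_le_compat_r => //; apply: le_INR; apply/leP.
exact: (DirChar_list_length_le q q_prime chars nd chars_q).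
Qed.
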